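(* For every annotated CQ $(q,E)$ with $E=(E^+,E^-)$, the $\preceq^{\mathrm{cod}}$-generalizations for $(q,E)$ are precisely the $\preceq^{\mathrm{cod}}$-repairs for $(q,E')$, where $E'=(E^+\cup\{e_q\},E^-)$.
   Context: Data examples are pairs $(I,\mathbf a)$ with $I$ a finite instance and $\mathbf a$ a $k$-tuple of its values. A $k$-ary CQ is $q(x_1,\dots,x_k)\text{ :- }\alpha_1,\dots,\alpha_n$ (relational atoms, no constants, each answer variable in some atom). Its canonical example $e_q$ is $(I_q,(x_1,\dots,x_k))$ with $I_q$ the set of atoms of $q$ viewed as facts. $[\![q]\!]$ is the set of data examples $(I,\mathbf a)$ with $\mathbf a\in q(I)$; $\subseteq$ is query containment; $q$ fits $E$ iff $E^+\subseteq[\![q]\!]$ and $E^-\cap[\![q]\!]=\emptyset$. $q_1\preceq^{\mathrm{cod}}_q q_2$ iff $[\![q]\!]\oplus[\![q_1]\!]\subseteq[\![q]\!]\oplus[\![q_2]\!]$ ($\oplus$ symmetric difference), $\prec_q$ its strict part. A $\preceq^{\mathrm{cod}}$-repair for $(q,E)$ is a CQ $q'$ fitting $E$ such that no CQ $q''$ fitting $E$ has $q''\prec^{\mathrm{cod}}_q q'$. A $\preceq^{\mathrm{cod}}$-generalization for $(q,E)$ is a CQ $q'$ fitting $E$ with $q\subseteq q'$ such that no CQ $q''$ fitting $E$ with $q\subseteq q''$ has $q''\prec^{\mathrm{cod}}_q q'$. Candidate CQs use only relation symbols occurring in the input. *)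

From mathcomp Require Import all_boot.
From Stdlib Require Import List.
Set Implicit Arguments. Unset Strict Implicit. Unset Printing Implicit Defensive.

(* A schema: relation symbols [Rel] with arities [ar]. Values and variables are nat. *)

Definition atom {Rel : Type} (ar : Rel -> nat) (V : Type) : Type :=
  {r : Rel & (ar r).-tuple V}.

Definition atom_map {Rel : Type} {ar : Rel -> nat} {V W : Type} (h : V -> W)
  (f : atom ar V) : atom ar W :=
  existT _ (projT1 f) (map_tuple h (projT2 f)).

Definition in_atom {Rel : Type} {ar : Rel -> nat} {V : Type} (v : V) (f : atom ar V) : Prop :=
  List.In v (tval (projT2 f)).

Definition instance {Rel : Type} (ar : Rel -> nat) : Type := list (atom ar nat).

Definition example {Rel : Type} (ar : Rel -> nat) (k : nat) : Type :=
  (instance ar * k.-tuple nat)%type.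

Definition wf_example {Rel : Type} {ar : Rel -> nat} {k : nat} (e : example ar k) : Prop :=
  forall i : 'I_k, exists f, List.In f e.1 /\ in_atom (tnth e.2 i) f.

(* k-ary CQ: answer variables and body atoms (variables are nat, no constants). *)
Record cq {Rel : Type} (ar : Rel -> nat) (k : nat) : Type :=
  CQ { cq_ans : k.-tuple nat; cq_atoms : list (atom ar nat) }.

Definition wf_cq {Rel : Type} {ar : Rel -> nat} {k : nat} (q : cq ar k) : Prop :=
  forall i : 'I_k, exists f, List.In f (cq_atoms q) /\ in_atom (tnth (cq_ans q) i) f.

Definition canonical_example {Rel : Type} {ar : Rel -> nat} {k : nat} (q : cq ar k)
  : example ar k := (cq_atoms q, cq_ans q).

Definition sem {Rel : Type} {ar : Rel -> nat} {k : nat} (q : cq ar k) (e : example ar k) : Prop :=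
  exists h : nat -> nat,
    (forall f, List.In f (cq_atoms q) -> List.In (atom_map h f) e.1) /\
    map_tuple h (cq_ans q) = e.2.

Definition contained {Rel : Type} {ar : Rel -> nat} {k : nat} (q1 q2 : cq ar k) : Prop :=
  forall e, sem q1 e -> sem q2 e.

Definition symdiff {T : Type} (A B : T -> Prop) (x : T) : Prop :=
  (A x /\ ~ B x) \/ (B x /\ ~ A x).

Definition cod_le {Rel : Type} {ar : Rel -> nat} {k : nat} (q q1 q2 : cq ar k) : Prop :=
  forall e, symdiff (sem q) (sem q1) e -> symdiff (sem q) (sem q2) e.

Definition cod_lt {Rel : Type} {ar : Rel -> nat} {k : nat} (q q1 q2 : cq ar k) : Prop :=
  cod_le q q1 q2 /\ ~ cod_le q q2 q1.

Record labeled {Rel : Type} (ar : Rel -> nat) (k : nat) : Type :=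
  Labeled { pos : list (example ar k); neg : list (example ar k) }.

Definition wf_labeled {Rel : Type} {ar : Rel -> nat} {k : nat} (E : labeled ar k) : Prop :=
  (forall e, List.In e (pos E) -> wf_example e) /\ (forall e, List.In e (neg E) -> wf_example e).

Definition add_pos {Rel : Type} {ar : Rel -> nat} {k : nat} (E : labeled ar k) (e : example ar k)
  : labeled ar k := Labeled (e :: pos E) (neg E).

Definition fits {Rel : Type} {ar : Rel -> nat} {k : nat} (q : cq ar k) (E : labeled ar k) : Prop :=
  (forall e, List.In e (pos E) -> sem q e) /\ (forall e, List.In e (neg E) -> ~ sem q e).

Definition rel_in_input {Rel : Type} {ar : Rel -> nat} {k : nat} (q : cq ar k) (E : labeled ar k)
  (r : Rel) : Prop :=
  (exists f, List.In f (cq_atoms q) /\ projT1 f = r) \/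
  (exists e, (List.In e (pos E) \/ List.In e (neg E)) /\
             exists f, List.In f e.1 /\ projT1 f = r).

Definition candidate {Rel : Type} {ar : Rel -> nat} {k : nat} (q : cq ar k) (E : labeled ar k)
  (q' : cq ar k) : Prop :=
  wf_cq q' /\ forall f, List.In f (cq_atoms q') -> rel_in_input q E (projT1 f).

Definition cod_repair {Rel : Type} {ar : Rel -> nat} {k : nat} (q : cq ar k) (E : labeled ar k)
  (q' : cq ar k) : Prop :=
  candidate q E q' /\ fits q' E /\
  forall q'', candidate q E q'' -> fits q'' E -> ~ cod_lt q q'' q'.

Definition cod_generalization {Rel : Type} {ar : Rel -> nat} {k : nat} (q : cq ar k)
  (E : labeled ar k) (q' : cq ar k) : Prop :=
  candidate q E q' /\ fits q' E /\ contained q q' /\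
  forall q'', candidate q E q'' -> fits q'' E -> contained q q'' -> ~ cod_lt q q'' q'.

From mathcomp Require Import all_boot.

(* By the homomorphism theorem of Chandra and Merlin, q is contained in q''
   exactly when the canonical example e_q belongs to [[q'']].  Hence "q'' fits
   E and contains q" says the same as "q'' fits E + e_q".  Moreover e_q only
   consists of atoms of q, so adding it to E introduces no new relation symbol
   and the candidate CQs are the same for both inputs.  The two minimality
   conditions therefore quantify over the same CQs. *)

Lemma map_tuple_id (T : Type) (n : nat) (t : n.-tuple T) : map_tuple id t = t.
Proof. by apply: val_inj; rewrite /= map_id. Qed.

Lemma map_tuple_comp (T U V : Type) (n : nat) (g : U -> V) (h : T -> U)
    (t : n.-tuple T) :
  map_tuple g (map_tuple h t) = map_tuple (g \o h) t.
Proof. by apply: val_inj; rewrite /= map_comp. Qed.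

Section Homomorphisms.

Variables (Rel : Type) (ar : Rel -> nat).

Lemma atom_map_id (V : Type) (f : atom ar V) : atom_map id f = f.
Proof. by case: f => r t; rewrite /atom_map /= map_tuple_id. Qed.

Lemma atom_map_comp (U V W : Type) (g : V -> W) (h : U -> V) (f : atom ar U) :
  atom_map g (atom_map h f) = atom_map (g \o h) f.
Proof. by rewrite /atom_map /= map_tuple_comp. Qed.

Variable k : nat.

Lemma sem_canonical_example (q : cq ar k) : sem q (canonical_example q).
Proof.
exists id; split; last exact: map_tuple_id.
by move=> f qf; rewrite atom_map_id.
Qed.

Lemma sem_trans (q q' : cq ar k) (e : example ar k) :
  sem q' (canonical_example q) -> sem q e -> sem q' e.
Proof.
move=> [h [h_atoms h_ans]] [g [g_atoms g_ans]].
exists (g \o h); split.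
- by move=> f q'f; rewrite -atom_map_comp; apply/g_atoms/h_atoms.
- by rewrite -map_tuple_comp h_ans.
Qed.

Lemma containedE (q q' : cq ar k) :
  contained q q' <-> sem q' (canonical_example q).
Proof.
split=> [qq' | hom e]; first exact/qq'/sem_canonical_example.
exact: sem_trans.
Qed.

End Homomorphisms.

Section AddPositive.

Variables (Rel : Type) (ar : Rel -> nat) (k : nat).
Implicit Types (q : cq ar k) (E : labeled ar k).

Lemma fits_add_pos (q' : cq ar k) E (e : example ar k) :
  fits q' (add_pos E e) <-> sem q' e /\ fits q' E.
Proof.
split=> [[sem_pos sem_neg] | [q'e [sem_pos sem_neg]]].
- by split; [apply: sem_pos; left | split=> // e' E'e'; apply: sem_pos; right].
- by split=> // e' /= [<- | E'e'] //; apply: sem_pos.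
Qed.

Lemma fits_add_canonical q (q' : cq ar k) E :
  fits q' (add_pos E (canonical_example q)) <-> contained q q' /\ fits q' E.
Proof. by rewrite fits_add_pos containedE. Qed.

Lemma rel_in_input_add_canonical q E (r : Rel) :
  rel_in_input q (add_pos E (canonical_example q)) r <-> rel_in_input q E r.
Proof.
rewrite /rel_in_input /=; split.
- case=> [q_r | [e [[[<- | Ee] | Ee] e_r]]]; [by left | by left | |];
    by right; exists e; split; [tauto | ].
- case=> [q_r | [e [Ee e_r]]]; first by left.
  by right; exists e; split; [tauto | ].
Qed.

Lemma candidate_add_canonical q E (q' : cq ar k) :
  candidate q (add_pos E (canonical_example q)) q' <-> candidate q E q'.
Proof.
by split=> -[wf_q' rels]; split=> // f q'f;
  apply/rel_in_input_add_canonical/rels.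
Qed.

End AddPositive.

Theorem proposition26 (Rel : Type) (ar : Rel -> nat) (k : nat)
  (q : cq ar k) (E : labeled ar k) :
  wf_cq q -> wf_labeled E ->
  forall q' : cq ar k,
    cod_generalization q E q' <-> cod_repair q (add_pos E (canonical_example q)) q'.
Proof.
move=> _ _ q'.
rewrite /cod_generalization /cod_repair candidate_add_canonical.
rewrite fits_add_canonical.
split=> [[cand [fit [qq' minimal]]] | [cand [[qq' fit] minimal]]].
- do 2!split=> //; move=> q'' /candidate_add_canonical cand''.
  by move=> /fits_add_canonical [qq'' fit'']; apply: minimal.
- do 3!split=> //; move=> q'' cand'' fit'' qq''.
  by apply: minimal; [apply/candidate_add_canonical | apply/fits_add_canonical].
Qed.
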